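(* Let $n\ge3$ and let $i<j$ be integers with $i\ge-1$. Then for every $b\in\mathcal{N}_i$ and $b'\in\mathcal{N}_j$, the bracket $[b,b']$ is either $0$ or lies in the $\mathbb{Z}$-span $\mathbb{Z}\mathcal{N}_{j-1}$; that is, $[\mathcal{N}_i,\mathcal{N}_j]\subseteq\mathbb{Z}\mathcal{N}_{j-1}\cup\{0\}$.
   Context: Fix an integer $n\ge 3$. A partition is a sequence $\Lambda=(\lambda_j)_{j\ge1}$ of non-negative integers with finite support; $\mathrm{wt}(\Lambda)=\sum_j j\lambda_j$; $\mathrm{Part}(k)$ is the set of partitions with $\lambda_j=0$ for $j>k$. Write $x^\Lambda=\prod_j x_j^{\lambda_j}$, $\deg(x^\Lambda)=\sum_j\lambda_j$, and let $\partial_k$ be the partial derivative with respect to $x_k$. $\mathfrak{L}(n)$ is the free $\mathbb{Z}$-module with basis $\mathcal{B}=\{x^\Lambda\partial_k : 1\le k\le n,\ \Lambda\in\mathrm{Part}(k-1)\}$, a Lie ring with bracket defined on basis elements by $[x^\Lambda\partial_k,x^\Theta\partial_j]=\partial_j(x^\Lambda)x^\Theta\partial_k$ if $j<k$, $-x^\Lambda\partial_k(x^\Theta)\partial_j$ if $j>k$, $0$ if $j=k$, extended bilinearly. For an integer $i\ge-1$, let $r_i\in\{1,\dots,n-1\}$ with $i\equiv r_i\pmod{n-1}$ and $h_i=\lfloor (i-1)/(n-1)\rfloor+1$. Define $\mathrm{WD}(x^\Lambda\partial_k)=\mathrm{wt}(\Lambda)-\deg(x^\Lambda)+n-k$ and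 $\mathrm{lev}_i(x^\Lambda\partial_k)=h_i\,\mathrm{WD}(x^\Lambda\partial_k)+\deg(x^\Lambda)-1$. For $i\ge-1$, $\mathcal{N}_i=\{b\in\mathcal{B}: \mathrm{lev}_j(b)\le j\text{ for some integer } -1\le j\le i\}$; $\mathbb{Z}\mathcal{N}_i$ is its $\mathbb{Z}$-span in $\mathfrak{L}(n)$. *)

From mathcomp Require Import all_boot all_order all_algebra.
Set Implicit Arguments. Unset Strict Implicit. Unset Printing Implicit Defensive.
Import Order.TTheory GRing.Theory Num.Theory.
Local Open Scope ring_scope.

(* A basis monomial x^Lambda d_k is encoded as the pair (k, s) where
   s = [:: lambda_1; ...; lambda_(k-1)] (so Lambda in Part(k-1) is encoded
   canonically by a sequence of length exactly k-1). *)
Definition bas := (nat * seq nat)%type.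

Definition is_basis (n : nat) (b : bas) : bool :=
  ((1 <= b.1)%N && (b.1 <= n)%N) && (size b.2 == b.1.-1).

Definition lam (s : seq nat) (j : nat) : nat := nth 0%N s j.-1.

Definition wt (s : seq nat) : nat := (\sum_(t < size s) t.+1 * nth 0 s t)%N.
Definition degm (s : seq nat) : nat := sumn s.

(* Elements of L(n) (as a free Z-module on B): Z-valued coefficient functions. *)
Definition elt := bas -> int.
Definition bvec (b : bas) : elt := fun x => (x == b)%:Z.
Definition zero_elt : elt := fun _ => 0.
Definition scale_elt (c : int) (v : elt) : elt := fun x => c * v x.

(* Bracket on basis elements:
   [x^L d_k, x^T d_j] = d_j(x^L) x^T d_k          if j < k
                      = - x^L d_k(x^T) d_j        if j > k
                      = 0                         if j = k. *)
Definition bracket (b b' : bas) : elt :=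
  let (k, L) := b in let (j, T) := b' in
  if (j < k)%N then
    scale_elt (lam L j)%:Z
      (bvec (k, mkseq (fun t => (nth 0 L t + nth 0 T t - (t == j.-1))%N) k.-1))
  else if (k < j)%N then
    scale_elt (- (lam T k)%:Z)
      (bvec (j, mkseq (fun t => (nth 0 L t + nth 0 T t - (t == k.-1))%N) j.-1))
  else zero_elt.

Definition hh (n : nat) (i : int) : int := ((i - 1) %/ (n%:Z - 1))%Z + 1.

Definition WD (n : nat) (b : bas) : int :=
  (wt b.2)%:Z - (degm b.2)%:Z + n%:Z - (b.1)%:Z.

Definition lev (n : nat) (i : int) (b : bas) : int :=
  hh n i * WD n b + (degm b.2)%:Z - 1.

Definition Nset (n : nat) (i : int) (b : bas) : Prop :=
  is_basis n b /\ exists j : int, -1 <= j /\ j <= i /\ lev n j b <= j.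

Definition inZspan (n : nat) (P : bas -> Prop) (v : elt) : Prop :=
  exists s : seq (int * bas),
    (forall p, p \in s -> is_basis n p.2 /\ P p.2) /\
    forall x, v x = \sum_(p <- s) p.1 * bvec p.2 x.

From mathcomp Require Import all_boot all_order all_algebra zify.
Import Order.TTheory GRing.Theory Num.Theory.

Set Implicit Arguments. Unset Strict Implicit. Unset Printing Implicit Defensive.

(* The bracket of two basis monomials b, b' is zero or an integer multiple of a
   single basis monomial d with WD(d) = WD(b) + WD(b') - (n-1) and
   deg(d) = deg(b) + deg(b') - 1, hence
   lev_x(d) = lev_x(b) + lev_x(b') - h_x (n-1).
   A monomial with lev_y(b) <= y has WD(b) <= n-1, so lev_x(b) <= h_x (n-1)
   whenever h_y <= h_x, strictly if h_y < h_x.  Given witnesses x for b and y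
   for b', this bounds the level of d at x if h_y <= h_x, at y if h_x < h_y and
   y < j, and at j-1 if y = j, using that lev_x(d) is monotone in h_x. *)

Definition wsum (w : nat -> nat) (s : seq nat) : nat :=
  \sum_(t < size s) w t * nth 0 s t.

(* The exponent of x^L x^T / x_(r+1), as a sequence of length N. *)
Definition mon_mul_div (L T : seq nat) (r N : nat) : seq nat :=
  mkseq (fun t => nth 0 L t + nth 0 T t - (t == r)) N.

Lemma degmE s : degm s = wsum (fun=> 1) s.
Proof.
rewrite /degm sumnE (big_nth 0) big_mkord.
by apply: eq_bigr => t _; rewrite mul1n.
Qed.

Lemma wtE s : wt s = wsum succn s.
Proof. by []. Qed.

Lemma wsum_widen w s N : size s <= N ->
  wsum w s = \sum_(t < N) w t * nth 0 s t.
Proof.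
move=> sN; rewrite /wsum -(subnKC sN) big_split_ord /=.
rewrite [X in _ = _ + X]big1 ?addn0 // => t _.
by rewrite nth_default ?muln0 // leq_addr.
Qed.

Lemma wsum_mkseq w f N : wsum w (mkseq f N) = \sum_(t < N) w t * f t.
Proof.
rewrite (@wsum_widen w _ N) ?size_mkseq //.
by apply: eq_bigr => t _; rewrite nth_mkseq.
Qed.

Lemma wsum_mon_mul_div w L T r N :
  size L <= N -> size T <= N -> r < N -> 0 < nth 0 L r + nth 0 T r ->
  wsum w (mon_mul_div L T r N) + w r = wsum w L + wsum w T.
Proof.
move=> sL sT rN LTr.
rewrite wsum_mkseq (wsum_widen w sL) (wsum_widen w sT) -big_split /=.
have -> : w r = \sum_(t < N) w t * (t == r :> nat).
  rewrite (bigD1 (Ordinal rN)) //= eqxx muln1 big1 ?addn0 // => t.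
  by rewrite -val_eqE /= => /negbTE ->; rewrite muln0.
rewrite -big_split /=; apply: eq_bigr => t _.
rewrite -mulnDr -mulnDr subnK //.
by case: eqP => [->|]; rewrite ?leq0n.
Qed.

Lemma degm_mon_mul_div L T r N :
  size L <= N -> size T <= N -> r < N -> 0 < nth 0 L r + nth 0 T r ->
  degm (mon_mul_div L T r N) + 1 = degm L + degm T.
Proof. by rewrite !degmE; apply: wsum_mon_mul_div. Qed.

Lemma wt_mon_mul_div L T r N :
  size L <= N -> size T <= N -> r < N -> 0 < nth 0 L r + nth 0 T r ->
  wt (mon_mul_div L T r N) + r.+1 = wt L + wt T.
Proof. by rewrite !wtE; apply: wsum_mon_mul_div. Qed.

Lemma degm_le_wt s : degm s <= wt s.
Proof.
by rewrite degmE; apply: leq_sum => t _; rewrite leq_mul2r ltn0Sn orbT.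
Qed.

Lemma wt_le_degm s : wt s <= size s * degm s.
Proof.
rewrite degmE /wsum big_distrr /=; apply: leq_sum => t _.
by rewrite mul1n leq_mul2r ltn_ord orbT.
Qed.

Local Open Scope ring_scope.

Lemma WD_mon_mul_div n k m L T S :
  (wt S + m = wt L + wt T)%N -> (degm S + 1 = degm L + degm T)%N ->
  WD n (k, S) + (n%:Z - 1) = WD n (k, L) + WD n (m, T).
Proof. rewrite /WD /=; lia. Qed.

Lemma WD_ge0 n b : is_basis n b -> 0 <= WD n b.
Proof.
case: b => k s; rewrite /is_basis /WD /= => /andP[/andP[k_ge1 k_le] _].
have := degm_le_wt s; lia.
Qed.

Lemma WD_add_degm_le n b : is_basis n b -> (degm b.2 <= 1)%N ->
  WD n b + (degm b.2)%:Z <= n%:Z - 1.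
Proof.
case: b => k s; rewrite /is_basis /WD /=.
move=> /andP[/andP[k_ge1 k_le] /eqP sz] deg_le1.
have := wt_le_degm s; rewrite sz; nia.
Qed.

Lemma bracket_cases n b b' : is_basis n b -> is_basis n b' ->
  (forall x, bracket b b' x = 0) \/
  exists c d, [/\ is_basis n d, WD n d + (n%:Z - 1) = WD n b + WD n b',
    (degm d.2 + 1 = degm b.2 + degm b'.2)%N &
    forall x, bracket b b' x = c * bvec d x].
Proof.
case: b b' => k L [m T]; rewrite /is_basis /=.
move=> /andP[/andP[k_ge1 k_le] /eqP szL] /andP[/andP[m_ge1 m_le] /eqP szT].
rewrite /bracket /scale_elt.
have [m_lt_k|k_le_m] := ltnP m k.
  have [c0|c_gt0] := posnP (lam L m); first by left=> x; rewrite c0 mul0r.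
  right; exists (lam L m)%:Z, (k, mon_mul_div L T m.-1 k.-1).
  have hyps : [/\ size L <= k.-1, size T <= k.-1, m.-1 < k.-1
              & 0 < nth 0 L m.-1 + nth 0 T m.-1]%N.
    by split; move: c_gt0; rewrite /lam; lia.
  case: hyps => szL_le szT_le r_lt exp_pos.
  split=> //; first by rewrite /is_basis /= size_mkseq k_ge1 k_le eqxx.
  - apply: WD_mon_mul_div; last exact: degm_mon_mul_div.
    rewrite -(wt_mon_mul_div szL_le szT_le r_lt exp_pos).
    by congr (_ + _)%N; lia.
  - exact: degm_mon_mul_div.
have [k_lt_m|m_le_k] := ltnP k m; last by left.
have [c0|c_gt0] := posnP (lam T k); first by left=> x; rewrite c0 oppr0 mul0r.
right; exists (- (lam T k)%:Z), (m, mon_mul_div L T k.-1 m.-1).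
have hyps : [/\ size L <= m.-1, size T <= m.-1, k.-1 < m.-1
            & 0 < nth 0 L k.-1 + nth 0 T k.-1]%N.
  by split; move: c_gt0; rewrite /lam; lia.
case: hyps => szL_le szT_le r_lt exp_pos.
split=> //; first by rewrite /is_basis /= size_mkseq m_ge1 m_le eqxx.
- rewrite [RHS]addrC; apply: WD_mon_mul_div; last first.
    by rewrite [RHS]addnC; exact: degm_mon_mul_div.
  rewrite [RHS]addnC -(wt_mon_mul_div szL_le szT_le r_lt exp_pos).
  by congr (_ + _)%N; lia.
- exact: degm_mon_mul_div.
Qed.

Lemma lev_le_lev n x y d : 0 <= WD n d -> hh n x <= hh n y ->
  lev n x d <= lev n y d.
Proof. by move=> d_ge0 hh_xy; rewrite /lev !lerD2r ler_wpM2r. Qed.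

Lemma lev_bracket n x b b' d :
  WD n d + (n%:Z - 1) = WD n b + WD n b' ->
  (degm d.2 + 1 = degm b.2 + degm b'.2)%N ->
  lev n x d = lev n x b + lev n x b' - hh n x * (n%:Z - 1).
Proof.
move=> eWD edeg; rewrite /lev.
have -> : WD n d = WD n b + WD n b' - (n%:Z - 1) by rewrite -eWD addrK.
have -> : (degm d.2)%:Z = (degm b.2)%:Z + (degm b'.2)%:Z - 1 by lia.
by rewrite mulrBr mulrDr; lia.
Qed.

Section Levels.

Variable n : nat.
Hypothesis n_ge3 : (3 <= n)%N.
Local Notation p := (n%:Z - 1).

Lemma hh_ge0 x : -1 <= x -> 0 <= hh n x.
Proof.
move=> x_ge; rewrite /hh -lerBlDr sub0r lez_divRL; lia.
Qed.

Lemma le_hh_mul x : x <= hh n x * p.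
Proof. by rewrite -ltzD1 -ltrBlDr; apply: ltz_ceil; lia. Qed.

Lemma hh_le x y : x <= y -> hh n x <= hh n y.
Proof.
move=> le_xy; rewrite /hh lerD2r lez_divRL; last lia.
by apply: le_trans (lez_floor _ _) _; lia.
Qed.

Lemma lev_subE x b :
  lev n x b - hh n x * p = hh n x * (WD n b - p) + (degm b.2)%:Z - 1.
Proof. by rewrite /lev; move: (WD n b) => A; rewrite mulrBr; lia. Qed.

Lemma lev_excess x b : lev n x b <= x ->
  hh n x * (WD n b - p) + (degm b.2)%:Z <= 1.
Proof. by have := le_hh_mul x; have := lev_subE x b; lia. Qed.

Lemma WD_top x b : is_basis n b -> -1 <= x -> lev n x b <= x ->
  p <= WD n b -> WD n b = p /\ degm b.2 = 0%N.
Proof.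
move=> bB x_ge lev_le WD_ge.
have excess := lev_excess lev_le.
have excess_ge0 : 0 <= hh n x * (WD n b - p).
  by rewrite mulr_ge0 ?hh_ge0 ?subr_ge0.
have deg_le1 : (degm b.2 <= 1)%N by lia.
by have := WD_add_degm_le bB deg_le1; lia.
Qed.

Lemma lev_le_hh_mul x y b : is_basis n b -> -1 <= y -> lev n y b <= y ->
  hh n y <= hh n x -> lev n x b <= hh n x * p.
Proof.
move=> bB y_ge lev_le hh_le_xy.
have excess := lev_excess lev_le; have := lev_subE x b.
have [WD_lt|WD_ge] := ltrP (WD n b) p.
  have : hh n x * (WD n b - p) <= hh n y * (WD n b - p).
    by rewrite ler_wnM2r ?subr_le0 ?(ltW WD_lt).
  lia.
have [-> deg0] := WD_top bB y_ge lev_le WD_ge.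
by rewrite subrr mulr0 deg0; lia.
Qed.

Lemma lev_lt_hh_mul x y b : is_basis n b -> -1 <= y -> lev n y b <= y ->
  hh n y < hh n x -> lev n x b < hh n x * p.
Proof.
move=> bB y_ge lev_le hh_lt_xy.
have excess := lev_excess lev_le; have := lev_subE x b.
have [WD_lt|WD_ge] := ltrP (WD n b) p.
  have : hh n x * (WD n b - p) <= (hh n y + 1) * (WD n b - p).
    by rewrite ler_wnM2r ?subr_le0 ?(ltW WD_lt) //; lia.
  rewrite mulrDl mul1r; lia.
have [-> deg0] := WD_top bB y_ge lev_le WD_ge.
by rewrite subrr mulr0 deg0; lia.
Qed.

Lemma Nset_bracket i j b b' d : -1 <= i -> i < j ->
  Nset n i b -> Nset n j b' -> is_basis n d ->
  WD n d + p = WD n b + WD n b' -> (degm d.2 + 1 = degm b.2 + degm b'.2)%N ->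
  Nset n (j - 1) d.
Proof.
move=> i_ge i_lt_j [bB [x [x_ge [x_le lev_b]]]] [b'B [y [y_ge [y_le lev_b']]]].
move=> dB eWD edeg; split=> //.
have levE z := lev_bracket z eWD edeg.
have [hh_yx|hh_xy] := lerP (hh n y) (hh n x).
  exists x; split=> //; split; first lia.
  by rewrite levE; have := lev_le_hh_mul b'B y_ge lev_b' hh_yx; lia.
have [y_lt_j|y_ge_j] := ltrP y j.
  exists y; split=> //; split; first lia.
  by rewrite levE; have := lev_le_hh_mul bB x_ge lev_b (ltW hh_xy); lia.
have y_eq_j : y = j by lia.
rewrite y_eq_j in lev_b' hh_xy.
exists (j - 1); split; first lia; split=> //.
have hh_pred : hh n (j - 1) <= hh n j by apply: hh_le; lia.
apply: le_trans (lev_le_lev (WD_ge0 dB) hh_pred) _.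
by rewrite levE; have := lev_lt_hh_mul bB x_ge lev_b hh_xy; lia.
Qed.

End Levels.

Theorem lemma3p1 (n : nat) (i j : int) (b b' : bas) :
  (3 <= n)%N -> -1 <= i -> i < j ->
  Nset n i b -> Nset n j b' ->
  (forall x, bracket b b' x = 0) \/ inZspan n (Nset n (j - 1)) (bracket b b').
Proof.
move=> n_ge3 i_ge i_lt_j Nb Nb'.
have [|[c [d [dB eWD edeg bracketE]]]] := bracket_cases Nb.1 Nb'.1.
  by left.
right; exists [:: (c, d)]; split; last by move=> x; rewrite big_seq1 bracketE.
move=> q; rewrite mem_seq1 => /eqP -> /=; split=> //.
exact: Nset_bracket i_ge i_lt_j Nb Nb' dB eWD edeg.
Qed.
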